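(* Let the timeline be $(\mathbb{Z},\leq)$, let $\mathcal{D}$ be a dataset that uses only bounded intervals, and let $\Pi$ be a DatalogMTL program. Then $\mathcal{R}$ is a $p$-repair of $\mathcal{D}$ w.r.t. $\Pi$ if and only if $\mathcal{R}$ is in normal form and $\mathrm{tp}(\mathcal{R})$ is a $\subseteq$-maximal $\Pi$-consistent subset of $\mathrm{tp}(\mathcal{D})$; and $\mathcal{C}$ is a $p$-conflict of $\mathcal{D}$ w.r.t. $\Pi$ if and only if $\mathcal{C}$ is in normal form and $\mathrm{tp}(\mathcal{C})$ is a $\subseteq$-minimal $\Pi$-inconsistent subset of $\mathrm{tp}(\mathcal{D})$.
   Context: DatalogMTL programs, datasets (finite sets of facts $\alpha@\iota$ with $\alpha$ a ground atom and $\iota$ a non-empty interval), models, $\Pi$-consistency and entailment are as usual. For a set of facts $\mathcal{B}$, $\mathrm{tp}(\mathcal{B})=\{\alpha@\{t\}\mid \mathcal{B}\models\alpha@\{t\}\}$. A set of facts is in normal form if it contains no two distinct facts $\alpha@\iota_1,\alpha@\iota_2$ with the same atom such that $\iota_1\cup\iota_2$ (as a set of timepoints) is the set of timepoints of an interval. $\mathcal{B}'\sqsubseteq^p\mathcal{B}$ means $\mathcal{B}\models\alpha@\iota'$ for every $\alpha@\iota'\in\mathcal{B}'$, and $\mathcal{B}'\sqsubset^p\mathcal{B}$ means $\mathcal{B}'\sqsubseteq^p\mathcal{B}$ and not $\mathcal{B}\sqsubseteq^p\mathcal{B}'$. A $p$-repair of $\mathcal{D}$ w.r.t. $\Pi$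 is a set of facts $\mathcal{R}$ in normal form, $\Pi$-consistent, with $\mathcal{R}\sqsubseteq^p\mathcal{D}$, such that there is no $\Pi$-consistent $\mathcal{R}'$ with $\mathcal{R}\sqsubset^p\mathcal{R}'\sqsubseteq^p\mathcal{D}$. A $p$-conflict of $\mathcal{D}$ w.r.t. $\Pi$ is a set $\mathcal{C}$ in normal form, $\Pi$-inconsistent, with $\mathcal{C}\sqsubseteq^p\mathcal{D}$, such that there is no $\Pi$-inconsistent $\mathcal{C}'$ with $\mathcal{C}'\sqsubset^p\mathcal{C}$. *)

From Stdlib Require Import ZArith List.
Import ListNotations.
Open Scope Z_scope.
Set Implicit Arguments.

Section DatalogMTL.
Variables (Pred Const Var : Type).

(** Over the integer timeline every interval (with
    open or closed, finite or infinite endpoints) is a closed interval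
    with optional endpoints: [lo, hi], None meaning -oo (resp. +oo). *)
Record interval := Itv { lo : option Z; hi : option Z }.

Definition in_itv (i : interval) (t : Z) : Prop :=
  match lo i with None => True | Some a => a <= t end /\
  match hi i with None => True | Some b => t <= b end.

Definition itv_nonempty (i : interval) : Prop := exists t, in_itv i t.
Definition itv_bounded (i : interval) : Prop := lo i <> None /\ hi i <> None.
Definition punct (t : Z) : interval := Itv (Some t) (Some t).

Definition metric_itv (r : interval) : Prop :=
  itv_nonempty r /\ exists a, lo r = Some a /\ 0 <= a.

Inductive term := TConst (c : Const) | TVar (v : Var).

Inductive matom :=
| MTop | MBot
| MRel (p : Pred) (ts : list term)
| MBoxMinus (r : interval) (a : matom)
| MBoxPlus (r : interval) (a : matom)
| MDiaMinus (r : interval) (a : matom)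
| MDiaPlus (r : interval) (a : matom)
| MSince (r : interval) (a b : matom)
| MUntil (r : interval) (a b : matom).

Inductive hatom :=
| HRel (p : Pred) (ts : list term)
| HBoxMinus (r : interval) (h : hatom)
| HBoxPlus (r : interval) (h : hatom).

(** A rule  A1 /\ ... /\ Ak -> B ; head None stands for bottom. *)
Record rule := Rule { body : list matom; head : option hatom }.
Definition program := list rule.

Fixpoint matom_vars (a : matom) : list Var :=
  match a with
  | MTop | MBot => []
  | MRel _ ts => flat_map (fun t => match t with TVar v => [v] | _ => [] end) ts
  | MBoxMinus _ a | MBoxPlus _ a | MDiaMinus _ a | MDiaPlus _ a => matom_vars a
  | MSince _ a b | MUntil _ a b => matom_vars a ++ matom_vars b
  end.
Fixpoint hatom_vars (h : hatom) : list Var :=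
  match h with
  | HRel _ ts => flat_map (fun t => match t with TVar v => [v] | _ => [] end) ts
  | HBoxMinus _ h | HBoxPlus _ h => hatom_vars h
  end.
Fixpoint matom_itvs_ok (a : matom) : Prop :=
  match a with
  | MTop | MBot | MRel _ _ => True
  | MBoxMinus r a | MBoxPlus r a | MDiaMinus r a | MDiaPlus r a =>
      metric_itv r /\ matom_itvs_ok a
  | MSince r a b | MUntil r a b => metric_itv r /\ matom_itvs_ok a /\ matom_itvs_ok b
  end.
Fixpoint hatom_itvs_ok (h : hatom) : Prop :=
  match h with
  | HRel _ _ => True
  | HBoxMinus r h | HBoxPlus r h => metric_itv r /\ hatom_itvs_ok h
  end.
Definition rule_wf (r : rule) : Prop :=
  body r <> [] /\
  (forall a, In a (body r) -> matom_itvs_ok a) /\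
  match head r with
  | None => True
  | Some h => hatom_itvs_ok h /\
      (forall v, In v (hatom_vars h) -> exists a, In a (body r) /\ In v (matom_vars a))
  end.
Definition program_wf (Pi : program) : Prop := forall r, In r Pi -> rule_wf r.

Definition gatom : Type := (Pred * list Const)%type.
Definition fact : Type := (gatom * interval)%type.
Definition fset : Type := fact -> Prop.
Definition facts_wf (B : fset) : Prop := forall f, B f -> itv_nonempty (snd f).
Definition dataset : Type := list fact.
Definition dset (D : dataset) : fset := fun f => In f D.
Definition dataset_wf (D : dataset) : Prop := facts_wf (dset D).
Definition dataset_bounded (D : dataset) : Prop :=
  forall f, In f D -> itv_bounded (snd f).

Definition interp : Type := Z -> gatom -> Prop.

Definition eval_term (s : Var -> Const) (t : term) : Const :=
  match t with TConst c => c | TVar v => s v end.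

Fixpoint msat (M : interp) (s : Var -> Const) (t : Z) (a : matom) : Prop :=
  match a with
  | MTop => True
  | MBot => False
  | MRel p ts => M t (p, map (eval_term s) ts)
  | MBoxMinus r a => forall t', in_itv r (t - t') -> msat M s t' a
  | MBoxPlus r a => forall t', in_itv r (t' - t) -> msat M s t' a
  | MDiaMinus r a => exists t', in_itv r (t - t') /\ msat M s t' a
  | MDiaPlus r a => exists t', in_itv r (t' - t) /\ msat M s t' a
  | MSince r a b => exists t', in_itv r (t - t') /\ msat M s t' b /\
      forall t'', t' < t'' < t -> msat M s t'' a
  | MUntil r a b => exists t', in_itv r (t' - t) /\ msat M s t' b /\
      forall t'', t < t'' < t' -> msat M s t'' a
  end.

Fixpoint hsat (M : interp) (s : Var -> Const) (t : Z) (h : hatom) : Prop :=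
  match h with
  | HRel p ts => M t (p, map (eval_term s) ts)
  | HBoxMinus r h => forall t', in_itv r (t - t') -> hsat M s t' h
  | HBoxPlus r h => forall t', in_itv r (t' - t) -> hsat M s t' h
  end.

Definition sat_rule (M : interp) (r : rule) : Prop :=
  forall (s : Var -> Const) (t : Z),
    (forall a, In a (body r) -> msat M s t a) ->
    match head r with None => False | Some h => hsat M s t h end.

Definition sat_program (M : interp) (Pi : program) : Prop :=
  forall r, In r Pi -> sat_rule M r.

Definition sat_fact (M : interp) (f : fact) : Prop :=
  forall t, in_itv (snd f) t -> M t (fst f).

Definition sat_fset (M : interp) (B : fset) : Prop := forall f, B f -> sat_fact M f.

Definition consistent (Pi : program) (B : fset) : Prop :=
  exists M, sat_program M Pi /\ sat_fset M B.

Definition entails (B : fset) (f : fact) : Prop :=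
  forall M, sat_fset M B -> sat_fact M f.

Definition tp (B : fset) : fset :=
  fun f => exists (al : gatom) (t : Z), f = (al, punct t) /\ entails B (al, punct t).

Definition normal_form (B : fset) : Prop :=
  forall (al : gatom) (i1 i2 : interval),
    B (al, i1) -> B (al, i2) -> (al, i1) <> (al, i2) ->
    ~ (exists i, forall t, in_itv i t <-> (in_itv i1 t \/ in_itv i2 t)).

Definition subset (A B : fset) : Prop := forall f, A f -> B f.

Definition psub (B' B : fset) : Prop := forall f, B' f -> entails B f.
Definition psub_strict (B' B : fset) : Prop := psub B' B /\ ~ psub B B'.

Definition p_repair (D : dataset) (Pi : program) (R : fset) : Prop :=
  facts_wf R /\ normal_form R /\ consistent Pi R /\ psub R (dset D) /\
  ~ (exists R', facts_wf R' /\ consistent Pi R' /\ psub_strict R R' /\ psub R' (dset D)).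

Definition p_conflict (D : dataset) (Pi : program) (C : fset) : Prop :=
  facts_wf C /\ normal_form C /\ ~ consistent Pi C /\ psub C (dset D) /\
  ~ (exists C', facts_wf C' /\ ~ consistent Pi C' /\ psub_strict C' C).

Definition max_consistent_subset (Pi : program) (S T : fset) : Prop :=
  subset S T /\ consistent Pi S /\
  ~ (exists S', subset S S' /\ ~ subset S' S /\ subset S' T /\ consistent Pi S').

Definition min_inconsistent_subset (Pi : program) (S T : fset) : Prop :=
  subset S T /\ ~ consistent Pi S /\
  ~ (exists S', subset S' S /\ ~ subset S S' /\ ~ consistent Pi S').

End DatalogMTL.

From Stdlib Require Import ZArith Lia Setoid.

(* A set of facts B has a least model, in which an atom holds at t iff some fact
   of B puts it on an interval containing t.  Hence B entails a punctual fact
   iff one of its facts covers it, so B and tp(B) have the same models, and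
   entailment between sets of facts is inclusion of their punctual closures.
   Both sides of each equivalence are thereby statements about subsets of
   tp(D): a repair (conflict) R corresponds to tp(R), and conversely a subset
   S of tp(D) is itself a set of facts with tp(S) = S. *)

Set Implicit Arguments.

Section PunctualClosure.
Variables (Pred Const Var : Type).
Implicit Types (A B S Y : fset Pred Const) (Pi : program Pred Const Var).

Lemma in_punct (t t' : Z) : in_itv (punct t) t' <-> t' = t.
Proof. unfold in_itv; simpl; lia. Qed.

Lemma entails_punct B al t :
  entails B (al, punct t) <-> exists f, B f /\ fst f = al /\ in_itv (snd f) t.
Proof.
  split.
  - intros Hent.
    set (M := fun t' g => exists f, B f /\ fst f = g /\ in_itv (snd f) t').
    apply (Hent M); [| apply in_punct; reflexivity].
    intros f Hf t' Ht'. exists f; auto.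
  - intros [f [Hf [<- Ht]]] M HM t' Ht'.
    apply in_punct in Ht' as ->. exact (HM f Hf t Ht).
Qed.

Lemma entails_pointwise B f :
  entails B f <-> forall t, in_itv (snd f) t -> entails B (fst f, punct t).
Proof.
  split.
  - intros Hent t Ht M HM t' Ht'. apply in_punct in Ht' as ->.
    exact (Hent M HM t Ht).
  - intros Hent M HM t Ht. apply (Hent t Ht M HM t), in_punct; reflexivity.
Qed.

Lemma tp_of_fact {B f t} : B f -> in_itv (snd f) t -> tp B (fst f, punct t).
Proof.
  intros Hf Ht. exists (fst f), t. split; [reflexivity |].
  apply entails_punct. exists f; auto.
Qed.

Lemma sat_fset_tp (M : interp Pred Const) B : sat_fset M (tp B) <-> sat_fset M B.
Proof.
  split.
  - intros HM f Hf t Ht. apply (HM _ (tp_of_fact Hf Ht)), in_punct; reflexivity.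
  - intros HM f [al [t [-> Hent]]]. exact (Hent M HM).
Qed.

Lemma consistent_tp Pi B : consistent Pi (tp B) <-> consistent Pi B.
Proof.
  unfold consistent. split; intros [M [HPi HB]]; exists M;
    rewrite sat_fset_tp in *; auto.
Qed.

Lemma psub_tp A B : psub A B <-> subset (tp A) (tp B).
Proof.
  split.
  - intros HAB f [al [t [-> Hent]]]. exists al, t. split; [reflexivity |].
    apply entails_punct in Hent as [g [Hg [<- Ht]]].
    exact (proj1 (entails_pointwise B g) (HAB g Hg) t Ht).
  - intros HAB f Hf. apply entails_pointwise. intros t Ht.
    destruct (HAB _ (tp_of_fact Hf Ht)) as [al [t' [-> Hent]]]. exact Hent.
Qed.

Lemma psub_strict_tp A B :
  psub_strict A B <-> subset (tp A) (tp B) /\ ~ subset (tp B) (tp A).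
Proof. unfold psub_strict. rewrite !psub_tp. reflexivity. Qed.

Lemma tp_subset_tp S Y : subset S (tp Y) -> forall f, tp S f <-> S f.
Proof.
  intros HS f. split.
  - intros [al [t [-> Hent]]].
    apply entails_punct in Hent as [g [Hg [<- Ht]]].
    destruct (HS g Hg) as [al [t' [-> _]]].
    simpl in Ht. apply in_punct in Ht as ->. exact Hg.
  - intros Hf. destruct (HS f Hf) as [al [t [-> _]]].
    exists al, t. split; [reflexivity |]. intros M HM. exact (HM _ Hf).
Qed.

Lemma facts_wf_subset_tp S Y : subset S (tp Y) -> facts_wf S.
Proof.
  intros HS f Hf. destruct (HS f Hf) as [al [t [-> _]]].
  exists t. apply in_punct. reflexivity.
Qed.

Lemma p_repair_tp D Pi R :
  p_repair D Pi R <->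
  facts_wf R /\ normal_form R /\ max_consistent_subset Pi (tp R) (tp (dset D)).
Proof.
  unfold p_repair, max_consistent_subset.
  rewrite consistent_tp, psub_tp.
  assert (Hlarger :
    (exists R', facts_wf R' /\ consistent Pi R' /\ psub_strict R R' /\ psub R' (dset D)) <->
    (exists S', subset (tp R) S' /\ ~ subset S' (tp R) /\
                subset S' (tp (dset D)) /\ consistent Pi S')).
  { split.
    - intros [R' [_ HR']]. exists (tp R').
      rewrite psub_strict_tp, psub_tp, <- consistent_tp in HR'. tauto.
    - intros [S' [HRS' [HS'R [HS'D HS']]]]. exists S'.
      rewrite psub_strict_tp, psub_tp.
      unfold subset in *. setoid_rewrite (tp_subset_tp HS'D).
      split; [exact (facts_wf_subset_tp HS'D) | tauto]. }
  rewrite Hlarger. tauto.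
Qed.

Lemma p_conflict_tp D Pi C :
  p_conflict D Pi C <->
  facts_wf C /\ normal_form C /\ min_inconsistent_subset Pi (tp C) (tp (dset D)).
Proof.
  unfold p_conflict, min_inconsistent_subset.
  rewrite consistent_tp, psub_tp.
  assert (Hsmaller :
    (exists C', facts_wf C' /\ ~ consistent Pi C' /\ psub_strict C' C) <->
    (exists S', subset S' (tp C) /\ ~ subset (tp C) S' /\ ~ consistent Pi S')).
  { split.
    - intros [C' [_ HC']]. exists (tp C').
      rewrite psub_strict_tp, <- consistent_tp in HC'. tauto.
    - intros [S' [HS'C [HCS' HS']]]. exists S'.
      rewrite psub_strict_tp.
      unfold subset in *. setoid_rewrite (tp_subset_tp HS'C).
      split; [exact (facts_wf_subset_tp HS'C) | tauto]. }
  rewrite Hsmaller. tauto.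
Qed.

End PunctualClosure.

Theorem mainTheorem3 (Pred Const Var : Type) (D : dataset Pred Const)
  (Pi : program Pred Const Var) :
  dataset_wf D -> dataset_bounded D -> program_wf Pi ->
  (forall R : fset Pred Const, facts_wf R ->
     (p_repair D Pi R <-> normal_form R /\ max_consistent_subset Pi (tp R) (tp (dset D)))) /\
  (forall C : fset Pred Const, facts_wf C ->
     (p_conflict D Pi C <-> normal_form C /\ min_inconsistent_subset Pi (tp C) (tp (dset D)))).
Proof.
  intros _ _ _. split.
  - intros R HR. rewrite p_repair_tp. tauto.
  - intros C HC. rewrite p_conflict_tp. tauto.
Qed.
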